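(* Assume $q=p$ and let $P=[1:0:0]\in C$. The higher ramification groups in lower numbering of $P$ under the action of $G$ are $$G_{P,i}=\begin{cases}B&i\in\{-1,0\},\\ U& 1\leq i\leq p+1,\\ 1& i\geq p+2.\end{cases}$$
   Context: $p$ odd prime, $\mathbb{F}$ algebraically closed of characteristic $p$, $C$ the Drinfeld curve $XY^p-X^pY-Z^{p+1}=0$ in $\mathbb{P}^2(\mathbb{F})$, $G=SL_2(\mathbb{F}_p)$ acting by $\begin{pmatrix}\alpha&\beta\\ \gamma&\delta\end{pmatrix}\cdot[X:Y:Z]=[\alpha X+\beta Y:\gamma X+\delta Y:Z]$; $U$ = upper unitriangular matrices, $B$ = upper triangular matrices in $G$. Lower ramification groups: $G_{P,-1}=G_P$ (stabilizer) and $G_{P,i}=\{g\in G_P:\operatorname{ord}_P(g^*t-t)\geq i+1\}$ for $i\geq0$, $t$ a local parameter at $P$. *)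

From HB Require Import structures.
From mathcomp Require Import all_boot all_order all_algebra.
From mathcomp Require Import mpoly.
Set Implicit Arguments. Unset Strict Implicit. Unset Printing Implicit Defensive.
Import Order.TTheory GRing.Theory.
Local Open Scope ring_scope.

Section Drinfeld.
Variables (F : closedFieldType) (p : nat).

Definition vX : {mpoly F[3]} := 'X_(0 : 'I_3).
Definition vY : {mpoly F[3]} := 'X_(1 : 'I_3).
Definition vZ : {mpoly F[3]} := 'X_(2 : 'I_3).

Definition drinfeld_poly : {mpoly F[3]} :=
  vX * vY ^+ p - vX ^+ p * vY - vZ ^+ p.+1.

Definition homog_of_deg (d : nat) (A : {mpoly F[3]}) : Prop :=
  forall m, m \in msupp A -> mdeg m = d.

Definition ptP : 'I_3 -> F := fun i => if i == 0 then 1 else 0.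

(* matrix entries of g = (alpha beta; gamma delta) *)
Definition ga (g : 'M[F]_2) := g 0 0.
Definition gb (g : 'M[F]_2) := g 0 1.
Definition gc (g : 'M[F]_2) := g 1 0.
Definition gd (g : 'M[F]_2) := g 1 1.

(* G = SL_2(F_p), viewed inside 'M[F]_2 (F_p = {x | x^p = x} in F) *)
Definition inSL2p (g : 'M[F]_2) : Prop :=
  \det g = 1 /\ forall i j, g i j ^+ p = g i j.
Definition inB (g : 'M[F]_2) : Prop := inSL2p g /\ gc g = 0.
Definition inU (g : 'M[F]_2) : Prop :=
  inSL2p g /\ gc g = 0 /\ ga g = 1 /\ gd g = 1.

Definition act_pt (g : 'M[F]_2) (v : 'I_3 -> F) : 'I_3 -> F :=
  fun i => if i == 0 then ga g * v 0 + gb g * v 1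
           else if i == 1 then gc g * v 0 + gd g * v 1 else v 2.

Definition stabP (g : 'M[F]_2) : Prop :=
  exists c : F, c != 0 /\ forall i, act_pt g ptP i = c * ptP i.

Definition pullback (g : 'M[F]_2) (A : {mpoly F[3]}) : {mpoly F[3]} :=
  A \mPo [tuple ga g *: vX + gb g *: vY; gc g *: vX + gd g *: vY; vZ].

(* dehomogenization in the affine chart X = 1, with y = 'X_0, z = 'X_1 *)
Definition dehom (A : {mpoly F[3]}) : {mpoly F[2]} :=
  A \mPo [tuple 1; 'X_(0 : 'I_2); 'X_(1 : 'I_2)].

(* N/D lies in m_P^n O_{C,P}: in the local ring F[y,z]_{(y,z)}/(f) at P=(0,0),
   N/D = b/u with u(P) <> 0 and b in (y,z)^n, i.e. u N - D b is a multiple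
   of the affine equation f. *)
Definition in_mP_pow (n : nat) (N D : {mpoly F[3]}) : Prop :=
  exists u a b : {mpoly F[2]},
    u.@[fun _ => 0] != 0 /\
    u * dehom N = dehom D * b + a * dehom drinfeld_poly /\
    (forall m, m \in msupp b -> (n <= mdeg m)%N).

Definition ord_ge (n : nat) (N D : {mpoly F[3]}) : Prop := in_mP_pow n N D.

Definition local_param (A B : {mpoly F[3]}) : Prop :=
  (exists d, homog_of_deg d A /\ homog_of_deg d B) /\
  B.@[ptP] != 0 /\ ord_ge 1 A B /\ ~ ord_ge 2 A B.

(* G_{P,i} for i >= 0 with respect to t = A/B:
   g in G_P and ord_P (g^* t - t) >= i+1, where
   g^* t - t = (g^*A * B - A * g^*B) / (g^*B * B). *)
Definition ram_group (A B : {mpoly F[3]}) (i : nat) (g : 'M[F]_2) : Prop :=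
  stabP g /\
  ord_ge i.+1 (pullback g A * B - A * pullback g B) (pullback g B * B).

End Drinfeld.

(* In the chart X = 1 with coordinates y = Y/X and z = Z/X the point P is the
   origin of the affine curve y^p - y = z^(p+1), and z is a local parameter.
   Since y = y^p - z^(p+1), the branch of C at P is y = -z^(p+1) up to terms
   of order p(p+1), so ord_P of a function is the t-adic order of its
   expansion along y := -t^(p+1), z := t, as long as that order is small.
   An upper triangular g = [a b; 0 d] maps (1 : y : z) to (a + b y : d y : z).
   Modulo (Y, Z^2) a local parameter A/B has A = c X^(e-1) Z and B = c' X^e
   with c c' <> 0, and the expansion of the numerator g^*A B - A g^*B of
   g^*(A/B) - A/B is c c' (a^(e-1) - a^e) t + O(t^2), and, when a = d = 1,
   c c' b t^(p+2) + O(t^(p+3)). *)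

From HB Require Import structures.
From mathcomp Require Import all_boot all_order all_algebra.
From mathcomp Require Import mpoly.
From mathcomp Require Import ring zify.
Import GRing.Theory.
Local Open Scope ring_scope.

Lemma det_mx2 (R : comNzRingType) (A : 'M[R]_2) :
  \det A = A 0 0 * A 1 1 - A 0 1 * A 1 0.
Proof.
rewrite (expand_det_row _ 0) big_ord_recr big_ord1 /= /cofactor !det_mx11 /=.
rewrite !mxE /= expr0 expr1 mul1r mulN1r.
have -> : widen_ord (leqnSn 1) ord0 = 0 :> 'I_2 by apply: val_inj.
have -> : lift (0 : 'I_2) 0 = 1 :> 'I_2 by apply: val_inj.
have -> : lift (ord_max : 'I_2) 0 = 0 :> 'I_2 by apply: val_inj.
have -> : (ord_max : 'I_2) = 1 by apply: val_inj.
by rewrite mulrN.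
Qed.

Lemma eq_mx2 (T : Type) (g h : 'M[T]_2) :
  g 0 0 = h 0 0 -> g 0 1 = h 0 1 -> g 1 0 = h 1 0 -> g 1 1 = h 1 1 -> g = h.
Proof.
move=> E00 E01 E10 E11; apply/matrixP => i j.
have ord2P (k : 'I_2) : k = 0 \/ k = 1.
  by case: k => [[|[|//]] ?]; [left|right]; apply: val_inj.
by case: (ord2P i) => ->; case: (ord2P j) => ->.
Qed.

Lemma mpoly_ind_ring n (R : comNzRingType) (P : {mpoly R[n]} -> Prop) :
  (forall c, P c%:MP) -> (forall i, P 'X_i) ->
  (forall x y, P x -> P y -> P (x + y)) ->
  (forall x y, P x -> P y -> P (x * y)) -> forall x, P x.
Proof.
move=> hC hX hD hM; elim/mpolyind => [|c m x _ _ hx]; first by rewrite -mpolyC0.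
apply: (hD) => //; rewrite -mul_mpolyC; apply: (hM) => //.
rewrite mpolyXE_id; apply: (big_ind P); [by rewrite -mpolyC1 | exact: hM |].
move=> i _; elim: (m i) => [|k IHk]; first by rewrite expr0 -mpolyC1.
by rewrite exprS; apply: hM.
Qed.

Lemma eq_mpoly_rmorph {n} {R : comNzRingType} {S : nzRingType}
    (f g : {rmorphism {mpoly R[n]} -> S}) :
  (forall c, f c%:MP = g c%:MP) -> (forall i, f 'X_i = g 'X_i) -> f =1 g.
Proof.
move=> fgC fgX; apply: mpoly_ind_ring => // x y fgx fgy.
  by rewrite !rmorphD fgx fgy.
by rewrite !rmorphM fgx fgy.
Qed.

Section MdegGe.
Context {k : nat} {R : ringType}.

Definition mdeg_ge n (b : {mpoly R[k]}) :=
  forall m, m \in msupp b -> (n <= mdeg m)%N.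

Lemma mdeg_ge_le m n b : (m <= n)%N -> mdeg_ge n b -> mdeg_ge m b.
Proof. by move=> le_mn bn u /bn; apply: leq_trans. Qed.

Lemma mdeg_geB n b c : mdeg_ge n b -> mdeg_ge n c -> mdeg_ge n (b - c).
Proof. by move=> bn cn u /msuppB_le; rewrite mem_cat => /orP[/bn|/cn]. Qed.

Lemma mdeg_geM m n b c : mdeg_ge m b -> mdeg_ge n c -> mdeg_ge (m + n) (b * c).
Proof.
move=> bm cn u /msuppM_le /allpairsP [[u1 u2] /= [u1b u2c ->]].
by rewrite mdegD leq_add ?bm ?cn.
Qed.

Lemma mdeg_geMl n b c : mdeg_ge n c -> mdeg_ge n (b * c).
Proof. by move=> cn; rewrite -[n]add0n; apply: mdeg_geM. Qed.

Lemma mdeg_ge_Xn (i : 'I_k) n : mdeg_ge n ('X_i ^+ n).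
Proof.
by move=> u; rewrite mpolyXn msuppX inE => /eqP ->; rewrite mdegMn mdeg1 mul1n.
Qed.

End MdegGe.

Lemma lowest_coef_eq0 {R : idomainType} {j} {c : R} {r : {poly R}} :
  'X^(j.+1) %| c%:P * 'X^j + 'X^(j.+1) * r -> c = 0.
Proof.
rewrite dvdp_addl; last exact: dvdp_mulr.
apply: contraTeq => c_neq0; apply/negP => dvd_cXj.
have cXj_neq0 : c%:P * 'X^j != 0 by rewrite mulf_neq0 ?polyC_eq0 ?expf_neq0 ?polyX_eq0.
by have := dvdp_leq cXj_neq0 dvd_cXj; rewrite size_Cmul // !size_polyXn ltnn.
Qed.

Lemma expr1D_sq {R : comNzRingType} (e : R) k :
  exists r, (1 + e) ^+ k = 1 + e * k%:R + e ^+ 2 * r.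
Proof.
elim: k => [|k [r Er]]; first by exists 0; rewrite expr0 !mulr0 !addr0.
by exists (k%:R + r * (1 + e)); rewrite exprS Er -natr1; ring.
Qed.

Section Drinfeld.
Context {F : closedFieldType} {p : nat}.
Hypothesis p_gt1 : (1 < p)%N.
Implicit Types (N D H : {mpoly F[3]}) (g : 'M[F]_2).

HB.instance Definition _ := GRing.RMorphism.copy (@dehom F)
  (comp_mpoly [tuple 1; 'X_(0 : 'I_2); 'X_(1 : 'I_2)]).
HB.instance Definition _ (g : 'M[F]_2) := GRing.RMorphism.copy (pullback g)
  (comp_mpoly [tuple ga g *: vX F + gb g *: vY F; gc g *: vX F + gd g *: vY F;
                     vZ F]).

Definition branch_y : {poly F} := - 'X^(p.+1).
Definition branch (i : 'I_2) : {poly F} := if i == 0 then branch_y else 'X.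

Definition expand : {mpoly F[2]} -> {poly F} := mmap (@polyC F) branch.
HB.instance Definition _ := GRing.RMorphism.copy expand
  (mmap (@polyC F) branch).

(* The homogeneous coordinates of g (1 : y(t) : t) for g = [a b; c d]. *)
Definition gcoords (a b c d : F) (i : 'I_3) : {poly F} :=
  if i == 0 then a%:P + b%:P * branch_y
  else if i == 1 then c%:P + d%:P * branch_y else 'X.

Definition coord_subst (v : 'I_3 -> {poly F}) : {mpoly F[3]} -> {poly F} :=
  mmap (@polyC F) v.
HB.instance Definition _ v := GRing.RMorphism.copy (coord_subst v)
  (mmap (@polyC F) v).

Lemma expandC c : expand c%:MP = c%:P. Proof. exact: mmapC. Qed.
Lemma expandX i : expand 'X_i = branch i. Proof. by rewrite /expand mmapX mmap1U. Qed.
Lemma coord_substC v c : coord_subst v c%:MP = c%:P. Proof. exact: mmapC. Qed.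
Lemma coord_substX v i : coord_subst v 'X_i = v i.
Proof. by rewrite /coord_subst mmapX mmap1U. Qed.

Lemma Xn_dvdp_branch_y n : (n <= p.+1)%N -> 'X^n %| branch_y.
Proof. by move=> le_np; rewrite /branch_y -mulN1r dvdp_mull // dvdp_exp2l. Qed.

Lemma pullback1 H : pullback (1%:M : 'M[F]_2) H = H.
Proof.
apply: (eq_mpoly_rmorph (pullback 1%:M) idfun _ _ H) => [c|i] /=.
  by rewrite /pullback comp_mpolyC.
rewrite /pullback comp_mpolyXU /ga /gb /gc /gd !mxE /=.
by case: i => [[|[|[|//]]] ?] /=; rewrite ?scale1r ?scale0r ?addr0 ?add0r;
  congr 'X_ _; apply: val_inj.
Qed.

Lemma expand_dehom_pullback g H :
  expand (dehom (pullback g H)) = coord_subst (gcoords (ga g) (gb g) (gc g) (gd g)) H.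
Proof.
apply: (eq_mpoly_rmorph (expand \o @dehom F \o pullback g) (coord_subst _) _ _ H).
  by move=> c /=; rewrite /pullback /dehom !comp_mpolyC expandC coord_substC.
move=> i /=; rewrite coord_substX /pullback comp_mpolyXU /dehom.
case: i => [[|[|[|//]]] ?]; rewrite /= /vX /vY ?comp_mpolyD ?comp_mpolyZ !comp_mpolyXU /=.
all: by rewrite -?mul_mpolyC ?mulr1 ?rmorphD ?rmorphM /= ?expandC expandX.
Qed.

Lemma expand_dehom H : expand (dehom H) = coord_subst (gcoords 1 0 0 1) H.
Proof. by rewrite -{1}[H]pullback1 expand_dehom_pullback /ga /gb /gc /gd !mxE. Qed.

Lemma expand_at0 h : (expand h).[0] = h.@[fun _ => 0].
Proof.
apply: (eq_mpoly_rmorph (horner_eval 0 \o expand) (meval _) _ _ h) => [c|i] /=.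
  by rewrite expandC /horner_eval hornerC mevalC.
rewrite expandX mevalXU /horner_eval /branch; case: ifP => _; last exact: hornerX.
by rewrite /branch_y hornerN hornerXn expr0n oppr0.
Qed.

Definition affine_eq : {mpoly F[2]} := 'X_0 ^+ p - 'X_0 - 'X_1 ^+ p.+1.

Lemma dehom_drinfeld : dehom (drinfeld_poly F p) = affine_eq.
Proof.
rewrite /drinfeld_poly !rmorphB !rmorphM !rmorphXn /= /dehom /vX /vY /vZ.
by rewrite !comp_mpolyXU /= expr1n !mul1r.
Qed.

Lemma expand_affine_eq : expand affine_eq = branch_y ^+ p.
Proof. by rewrite /affine_eq !rmorphB !rmorphXn /= !expandX /= /branch_y opprK addrK. Qed.

Lemma dvdp_expand n b : mdeg_ge n b -> 'X^n %| expand b.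
Proof.
move=> bn; rewrite /expand /mmap big_seq.
apply: (big_ind (fun q => 'X^n %| q)) => [|x y|m mb]; [exact: dvdp0|exact: dvdp_add|].
apply: dvdp_mull; rewrite /mmap1 big_ord_recr big_ord1 /= /branch /=.
have := bn m mb; rewrite mdegE big_ord_recr big_ord1 /= => le_n.
apply: dvdp_trans (dvdp_exp2l 'X le_n) _; rewrite exprD.
by rewrite dvdp_mul // dvdp_exp2r // -['X]expr1 Xn_dvdp_branch_y.
Qed.

Lemma ord_ge_le {m n N D} : (m <= n)%N -> ord_ge p n N D -> ord_ge p m N D.
Proof.
move=> le_mn [u [a [b [u0 [E bn]]]]]; exists u, a, b.
by split; [|split; [|exact: mdeg_ge_le bn]].
Qed.

(* Along the branch the affine equation vanishes to order p(p+1). *)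
Lemma ord_ge_dvdp_expand {n N D} :
  (n <= p * p.+1)%N -> ord_ge p n N D -> 'X^n %| expand (dehom N).
Proof.
move=> le_n [u [a [b [u0 [E bn]]]]].
have dvd_uN : 'X^n %| expand u * expand (dehom N).
  rewrite -rmorphM E rmorphD !rmorphM /= dvdp_add ?dvdp_mull //; first exact: dvdp_expand.
  rewrite dehom_drinfeld expand_affine_eq /branch_y -mulN1r exprMn dvdp_mull //.
  by rewrite -exprM mulnC dvdp_exp2l.
rewrite Gauss_dvdpr in dvd_uN => //; apply: coprimep_expl.
rewrite coprimep_sym -[X in coprimep _ X]subr0 -polyC0 coprimep_XsubC.
by rewrite rootE expand_at0.
Qed.

Definition lift_z : {poly F} -> {mpoly F[2]} :=
  horner_eval 'X_1 \o map_poly (mpolyC 2 (R:=F)).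
HB.instance Definition _ := GRing.RMorphism.copy lift_z
  (horner_eval 'X_1 \o map_poly (mpolyC 2 (R:=F))).

Lemma lift_zC c : lift_z c%:P = c%:MP.
Proof. by rewrite /lift_z /= map_polyC /horner_eval hornerC. Qed.
Lemma lift_zX : lift_z 'X = 'X_1.
Proof. by rewrite /lift_z /= map_polyX /horner_eval hornerX. Qed.

Lemma lift_z_expand h : exists q, h - lift_z (expand h) = ('X_0 + 'X_1 ^+ p.+1) * q.
Proof.
elim/mpoly_ind_ring: h.
- by move=> c; exists 0; rewrite expandC lift_zC subrr mulr0.
- case=> [[|[|//]] ?]; rewrite expandX /branch /=.
    exists 1; rewrite mulr1 /branch_y rmorphN rmorphXn /= lift_zX opprK.
    by congr ('X_ _ + _); apply: val_inj.
  by exists 0; rewrite lift_zX mulr0; apply/eqP; rewrite subr_eq0;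
     apply/eqP; congr 'X_ _; apply: val_inj.
- move=> x y [q1 E1] [q2 E2]; exists (q1 + q2).
  by rewrite !rmorphD /= mulrDr -E1 -E2 opprD addrACA.
move=> x y [q1 E1] [q2 E2]; exists (q1 * y + lift_z (expand x) * q2).
by rewrite !rmorphM /= mulrDr mulrA -E1 mulrCA -E2 mulrBl mulrBr addrA subrK.
Qed.

(* On the curve, y + z^(p+1) = y^p: multiplying by 1 - y^(p-1) turns the
   defect of the expansion into a multiple of the equation plus a term of
   degree 2p. *)
Lemma dvdp_expand_ord_ge n N D : (n <= 2 * p)%N ->
  (expand (dehom D)).[0] != 0 -> 'X^n %| expand (dehom N) -> ord_ge p n N D.
Proof.
move=> le_n D0 /dvdpP [r Er].
have [q Eq] := lift_z_expand (dehom N).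
have [k Ek] : exists k, p = k.+2 by exists p.-2; case: p p_gt1 => [|[|]].
set w : {mpoly F[2]} := 1 - 'X_0 ^+ k.+1.
exists (w * dehom D), (- (q * dehom D)),
  (w * lift_z r * 'X_1 ^+ n - q * 'X_0 ^+ k.+1 * 'X_1 ^+ p.+1).
split; [|split].
- rewrite /w rmorphM rmorphB rmorph1 rmorphXn /= mevalXU expr0n subr0 mul1r.
  by rewrite -expand_at0.
- rewrite dehom_drinfeld /affine_eq.
  have -> : dehom N = lift_z r * 'X_1 ^+ n + ('X_0 + 'X_1 ^+ p.+1) * q.
    by rewrite -Eq Er rmorphM rmorphXn /= lift_zX addrC subrK.
  rewrite /w Ek; clear Eq; move: (dehom D) (lift_z r) q => a b c.
  by rewrite !exprS; ring.
- apply: mdeg_geB; first by apply: mdeg_geMl; apply: mdeg_ge_Xn.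
  rewrite -mulrA; apply: mdeg_geMl.
  apply: (@mdeg_ge_le _ _ _ (k.+1 + p.+1)%N); first by rewrite Ek; lia.
  by apply: mdeg_geM; apply: mdeg_ge_Xn.
Qed.

Definition P_form d c0 c1 (P Q : {mpoly F[3]}) :=
  c0%:MP * vX F ^+ d + c1%:MP * (vX F ^+ d.-1 * vZ F) + vY F * P + vZ F ^+ 2 * Q.

Definition has_P_form d (H : {mpoly F[3]}) :=
  exists c0 c1 P Q, H = P_form d c0 c1 P Q /\ (d = 0%N -> c1 = 0).

Lemma has_P_formD d H1 H2 :
  has_P_form d H1 -> has_P_form d H2 -> has_P_form d (H1 + H2).
Proof.
move=> [a0 [a1 [P1 [Q1 [E1 Z1]]]]] [b0 [b1 [P2 [Q2 [E2 Z2]]]]].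
exists (a0 + b0), (a1 + b1), (P1 + P2), (Q1 + Q2); split.
  by rewrite E1 E2 /P_form !mpolyCD; ring.
by move=> d0; rewrite Z1 // Z2 // addr0.
Qed.

Lemma has_P_form_monomial d c (m : 'X_{1..3}) :
  mdeg m = d -> has_P_form d (c *: 'X_[m]).
Proof.
have big3 (f : 'I_3 -> nat) : \sum_(i < 3) f i = (f 0%R + f 1%R + f 2%R)%N.
  by rewrite !big_ord_recr big_ord0 /=; congr (f _ + f _ + f _)%N; apply: val_inj.
have monoE : 'X_[m] = vX F ^+ m 0 * vY F ^+ m 1 * vZ F ^+ m 2 :> {mpoly F[3]}.
  rewrite mpolyXE_id !big_ord_recr big_ord0 /= mul1r.
  by congr (_ ^+ m _ * _ ^+ m _ * _ ^+ m _); apply: val_inj.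
rewrite mdegE big3 monoE -mul_mpolyC => deg_m.
case Em1 : (m 1) => [|j]; last first.
  exists 0, 0, (c%:MP * vX F ^+ m 0 * vY F ^+ j * vZ F ^+ m 2), 0; split => //.
  by rewrite /P_form exprS mpolyC0; ring.
case Em2 : (m 2) => [|[|j]].
- exists c, 0, 0, 0; split => //.
  by rewrite /P_form -deg_m Em1 Em2 !addn0 expr0 mpolyC0; ring.
- exists 0, c, 0, 0; split; last by rewrite -deg_m Em1 Em2 addn1.
  by rewrite /P_form -deg_m Em1 Em2 addn0 addn1 /= expr0 expr1 mpolyC0; ring.
exists 0, 0, 0, (c%:MP * vX F ^+ m 0 * vZ F ^+ j); split => //.
by rewrite /P_form !exprS mpolyC0; ring.
Qed.

Lemma homog_has_P_form {d H} : homog_of_deg d H -> has_P_form d H.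
Proof.
move=> homH; rewrite [H]mpolyE.
have : {subset msupp H <= msupp H} by [].
elim: {-2}(msupp H) => [|m s IHs] sH.
  by rewrite big_nil; exists 0, 0, 0, 0; split => //; rewrite /P_form mpolyC0; ring.
rewrite big_cons; apply: has_P_formD.
  by apply/has_P_form_monomial/homH/sH; rewrite inE eqxx.
by apply: IHs => u us; apply: sH; rewrite inE us orbT.
Qed.

Lemma coord_subst_P_form v d c0 c1 P Q :
  coord_subst v (P_form d c0 c1 P Q) = c0%:P * v 0 ^+ d + c1%:P * v 0 ^+ d.-1 * v 2
    + v 1 * coord_subst v P + v 2 ^+ 2 * coord_subst v Q.
Proof.
by rewrite /P_form !rmorphD !rmorphM /= !coord_substC !rmorphXn /= !coord_substX mulrA.
Qed.

Lemma dvdp_coord_substB {n v v'} :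
  (forall i, 'X^n %| v i - v' i) -> forall H, 'X^n %| coord_subst v H - coord_subst v' H.
Proof.
move=> dvd_v; elim/mpoly_ind_ring.
- by move=> c; rewrite !coord_substC subrr dvdp0.
- by move=> i; rewrite !coord_substX.
- by move=> x y dvd_x dvd_y; rewrite !rmorphD /= opprD addrACA dvdp_add.
move=> x y dvd_x dvd_y; rewrite !rmorphM /=.
have -> : coord_subst v x * coord_subst v y - coord_subst v' x * coord_subst v' y =
  (coord_subst v x - coord_subst v' x) * coord_subst v y
  + coord_subst v' x * (coord_subst v y - coord_subst v' y) by ring.
by apply: dvdp_add; [apply: dvdp_mulr | apply: dvdp_mull].
Qed.

Lemma gcoords0 a b c d : gcoords a b c d 0 = a%:P + b%:P * branch_y. Proof. by []. Qed.
Lemma gcoords1 a b c d : gcoords a b c d 1 = c%:P + d%:P * branch_y. Proof. by []. Qed.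
Lemma gcoords2 a b c d : gcoords a b c d 2 = 'X. Proof. by []. Qed.

Lemma coord_subst_Borel (a b d : F) e c0 c1 P Q : exists r,
  coord_subst (gcoords a b 0 d) (P_form e c0 c1 P Q) =
    c0%:P * a%:P ^+ e + c1%:P * a%:P ^+ e.-1 * 'X + 'X^2 * r.
Proof.
set lhs := coord_subst _ _; set lead := _ + _ * 'X.
suff /dvdpP[r Er] : 'X^2 %| lhs - lead.
  by exists r; rewrite -[lhs](subrK lead) Er addrC mulrC.
rewrite /lhs coord_subst_P_form gcoords0 gcoords1 gcoords2 polyC0 add0r.
set s := a%:P + _; set cP := coord_subst _ P; set cQ := coord_subst _ Q.
have -> : c0%:P * s ^+ e + c1%:P * s ^+ e.-1 * 'X + d%:P * branch_y * cP + 'X ^+ 2 * cQ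
    - lead = c0%:P * (s ^+ e - a%:P ^+ e) + c1%:P * (s ^+ e.-1 - a%:P ^+ e.-1) * 'X
    + branch_y * (d%:P * cP) + 'X ^+ 2 * cQ by rewrite /lead; ring.
have dvd_y : 'X^2 %| branch_y by apply: Xn_dvdp_branch_y; lia.
have dvd_s k : 'X^2 %| s ^+ k - a%:P ^+ k.
  by rewrite subrXX dvdp_mulr // /s addrC addKr dvdp_mull.
apply: dvdp_add; last exact: dvdp_mulIl.
apply: dvdp_add; last exact: dvdp_mulr.
by apply: dvdp_add; [exact: dvdp_mull | apply/dvdp_mulr/dvdp_mull].
Qed.

Lemma coord_subst_unipotent (b : F) e c0 c1 P Q : exists r,
  coord_subst (gcoords 1 b 0 1) (P_form e c0 c1 P Q)
  - coord_subst (gcoords 1 0 0 1) (P_form e c0 c1 P Q) =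
    (b%:P * branch_y) * (c0%:P * e%:R + c1%:P * (e.-1)%:R * 'X) + 'X^(p.+1) * 'X^2 * r.
Proof.
set lhs := _ - _; set lin := _ * (_ + _).
suff /dvdpP[r Er] : 'X^(p.+1) * 'X^2 %| lhs - lin.
  by exists r; rewrite -[lhs](subrK lin) Er addrC mulrC.
have dvd_y : 'X^(p.+1) %| branch_y by apply: Xn_dvdp_branch_y.
have dvd_v i : 'X^(p.+1) %| gcoords 1 b 0 1 i - gcoords 1 0 0 1 i.
  rewrite /gcoords; case: ifP => _; last by case: ifP => _; rewrite subrr dvdp0.
  by rewrite polyC0 mul0r addr0 addrAC subrr add0r dvdp_mull.
set t := b%:P * branch_y.
have dvd_t2 : 'X^(p.+1) * 'X^2 %| t ^+ 2.
  rewrite -exprD (dvdp_trans (dvdp_exp2l _ (_ : p.+1 + 2 <= p.+1 + p.+1)%N)) //.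
    lia.
  by rewrite exprD dvdp_mul ?dvdp_mull.
have [r1 E1] := expr1D_sq t e; have [r2 E2] := expr1D_sq t e.-1.
rewrite /lhs !coord_subst_P_form !gcoords0 !gcoords1 !gcoords2.
rewrite polyC0 mul0r addr0 add0r mul1r polyC1 -/t E1 E2 !expr1n.
set cP := coord_subst _ P; set cP' := coord_subst _ P.
set cQ := coord_subst _ Q; set cQ' := coord_subst _ Q.
have -> : c0%:P * (1 + t * e%:R + t ^+ 2 * r1)
    + c1%:P * (1 + t * (e.-1)%:R + t ^+ 2 * r2) * 'X + branch_y * cP + 'X ^+ 2 * cQ
    - (c0%:P * 1 + c1%:P * 1 * 'X + branch_y * cP' + 'X ^+ 2 * cQ') - lin =
  t ^+ 2 * (c0%:P * r1 + c1%:P * r2 * 'X)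
  + branch_y * (cP - cP') + 'X ^+ 2 * (cQ - cQ') by rewrite /lin /t; ring.
apply: dvdp_add; last first.
  by rewrite mulrC; apply: dvdp_mul => //; exact: (dvdp_coord_substB dvd_v).
apply: dvdp_add; first exact: dvdp_mulr.
rewrite mulrC; apply: dvdp_mul; last exact: (dvdp_coord_substB dvd_v).
by apply: Xn_dvdp_branch_y; lia.
Qed.

Lemma local_param_P_form {A B} : local_param p A B ->
  exists d cA cB cB' (PA QA PB QB : {mpoly F[3]}),
    [/\ A = P_form d.+1 0 cA PA QA, B = P_form d.+1 cB cB' PB QB,
        cA != 0 & cB != 0].
Proof.
case=> [[e [homA homB]] [BP0 [ordA1 ordA2]]].
have [cA0 [cA [PA [QA [EA cA_e0]]]]] := homog_has_P_form homA.
have [cB [cB' [PB [QB [EB _]]]]] := homog_has_P_form homB.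
have [sA EsA] := coord_subst_Borel 1 0 1 e cA0 cA PA QA.
have [sB EsB] := coord_subst_Borel 1 0 1 e cB cB' PB QB.
rewrite polyC1 !expr1n !mulr1 -EA in EsA; rewrite polyC1 !expr1n !mulr1 -EB in EsB.
have cB_neq0 : cB != 0.
  move: BP0; rewrite EB /P_form !mevalD !mevalM !mevalC !rmorphXn /= !mevalXU /ptP /=.
  by rewrite expr1n mulr1 !mulr0 !mul0r !addr0.
have cA0_eq0 : cA0 = 0.
  have := ord_ge_dvdp_expand (leq_trans (ltnW p_gt1) (leq_pmulr _ (ltn0Sn _))) ordA1.
  rewrite expand_dehom EsA => dvd_A.
  by apply: (@lowest_coef_eq0 _ 0 _ (cA%:P + 'X * sA)); move: dvd_A; congr (_ %| _); ring.
have cA_neq0 : cA != 0.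
  apply/eqP => cA_eq0; apply: ordA2; apply: dvdp_expand_ord_ge; first lia.
    by rewrite expand_dehom EsB (_ : _ + _ = cB%:P + 'X * (cB'%:P + 'X * sB)) ?hornerE //;
      ring.
  by rewrite expand_dehom EsA cA0_eq0 cA_eq0 !polyC0 !mul0r !add0r dvdp_mulr.
case: e {homA homB} cA_e0 EA EB => [|d] cA_e0 EA EB; first by rewrite cA_e0 ?eqxx in cA_neq0.
by exists d, cA, cB, cB', PA, QA, PB, QB; rewrite EA EB cA0_eq0.
Qed.

Lemma stabP_iff {g} : \det g = 1 -> (stabP g <-> gc g = 0).
Proof.
rewrite det_mx2 => detg; split.
  by case=> c [_ /(_ 1)]; rewrite /act_pt /ptP /= mulr1 !mulr0 addr0.
move=> c0; exists (ga g); split.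
  apply: contra_eqN detg => /eqP a0; rewrite -/(ga g) -/(gc g) a0 c0.
  by rewrite mul0r mulr0 subr0 eq_sym oner_eq0.
by case=> [[|[|[|//]]] ?]; rewrite /act_pt /ptP /= ?mulr1 ?mulr0 ?addr0 ?c0 ?mul0r ?add0r.
Qed.

Section Filtration.
Variables (d : nat) (cA cB cB' : F) (PA QA PB QB : {mpoly F[3]}).
Hypotheses (cA_neq0 : cA != 0) (cB_neq0 : cB != 0).

Let A := P_form d.+1 0 cA PA QA.
Let B := P_form d.+1 cB cB' PB QB.
Let num g := pullback g A * B - A * pullback g B.
Let den g := pullback g B * B.

Let expand_num g : expand (dehom (num g)) =
  coord_subst (gcoords (ga g) (gb g) (gc g) (gd g)) A * coord_subst (gcoords 1 0 0 1) B
  - coord_subst (gcoords 1 0 0 1) A * coord_subst (gcoords (ga g) (gb g) (gc g) (gd g)) B.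
Proof. by rewrite /num !rmorphB !rmorphM /= !expand_dehom_pullback !expand_dehom. Qed.

Lemma expand_den_at0 {g} : gc g = 0 -> ga g != 0 -> (expand (dehom (den g))).[0] != 0.
Proof.
move=> c0 a0; rewrite /den !rmorphM /= expand_dehom_pullback expand_dehom c0.
have [rB ErB] := coord_subst_Borel (ga g) (gb g) (gd g) d.+1 cB cB' PB QB.
have [sB EsB] := coord_subst_Borel 1 0 1 d.+1 cB cB' PB QB.
rewrite hornerM -/B ErB EsB !hornerE /= expr0n /= !mul0r !addr0.
by rewrite expr1n mulr1 mulf_neq0 // mulf_neq0 // expf_neq0.
Qed.

Lemma ord_ge_Borel {g} : gc g = 0 -> ga g != 0 -> ga g != 1 ->
  forall n, ord_ge p n (num g) (den g) <-> (n <= 1)%N.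
Proof.
move=> c0 a0 a1; set a := ga g.
have [rA ErA] := coord_subst_Borel a (gb g) (gd g) d.+1 0 cA PA QA.
have [rB ErB] := coord_subst_Borel a (gb g) (gd g) d.+1 cB cB' PB QB.
have [sA EsA] := coord_subst_Borel 1 0 1 d.+1 0 cA PA QA.
have [sB EsB] := coord_subst_Borel 1 0 1 d.+1 cB cB' PB QB.
have expand_numE : expand (dehom (num g)) =
    (cA * cB * (a ^+ d - a ^+ d.+1))%:P * 'X^1 + 'X^2 *
    (cA%:P * a%:P ^+ d * (cB'%:P + 'X * sB)
     + rA * (cB%:P + cB'%:P * 'X + 'X^2 * sB)
     - cA%:P * (cB'%:P * a%:P ^+ d + 'X * rB)
     - sA * (cB%:P * a%:P ^+ d.+1 + cB'%:P * a%:P ^+ d * 'X + 'X^2 * rB)).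
  rewrite expand_num c0 -/A -/B ErA ErB EsA EsB /= polyC1 !expr1n.
  by rewrite !polyCM polyCB !polyC_exp polyC0 !exprS; ring.
have k_neq0 : cA * cB * (a ^+ d - a ^+ d.+1) != 0.
  rewrite !mulf_neq0 // exprS -{1}(mul1r (a ^+ d)) -mulrBl mulf_neq0 ?expf_neq0 //.
  by rewrite subr_eq0 eq_sym.
have ord1 : ord_ge p 1 (num g) (den g).
  apply: dvdp_expand_ord_ge; [lia | exact: expand_den_at0 |].
  rewrite expand_numE; apply: dvdp_add; first exact: dvdp_mull (dvdpp _).
  by apply/dvdp_mulr/dvdp_exp2l.
have not_ord2 : ~ ord_ge p 2 (num g) (den g).
  have le2 : (2 <= p * p.+1)%N by nia.
  move/(ord_ge_dvdp_expand le2); rewrite expand_numE => /lowest_coef_eq0 /eqP.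
  by rewrite (negbTE k_neq0).
move=> n; split=> [ord_n | le_n1]; last exact: ord_ge_le le_n1 ord1.
by rewrite leqNgt; apply/negP => lt1n; apply/not_ord2/(ord_ge_le lt1n ord_n).
Qed.

Lemma ord_ge_unipotent {g} : gc g = 0 -> ga g = 1 -> gd g = 1 -> gb g != 0 ->
  forall n, ord_ge p n (num g) (den g) <-> (n <= p.+2)%N.
Proof.
move=> c0 a1 d1 b0; set b := gb g.
have [uA EuA] := coord_subst_unipotent b d.+1 0 cA PA QA.
have [uB EuB] := coord_subst_unipotent b d.+1 cB cB' PB QB.
have [sA EsA] := coord_subst_Borel 1 0 1 d.+1 0 cA PA QA.
have [sB EsB] := coord_subst_Borel 1 0 1 d.+1 cB cB' PB QB.
rewrite polyC1 !expr1n !mulr1 in EsA EsB.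
have expand_numE : expand (dehom (num g)) = (b * cA * cB)%:P * 'X^(p.+2) + 'X^(p.+3) *
    (- b%:P * cA%:P * d%:R * (cB'%:P + 'X * sB)
     + uA * (cB%:P + cB'%:P * 'X + 'X^2 * sB)
     + b%:P * cA%:P * cB'%:P * d%:R - cA%:P * 'X * uB
     - sA * (- b%:P * (cB%:P * (d%:R + 1) + cB'%:P * d%:R * 'X) + 'X^2 * uB)).
  rewrite expand_num c0 a1 d1 -/A -/B -/b.
  rewrite -[coord_subst (gcoords 1 b 0 1) A](subrK (coord_subst (gcoords 1 0 0 1) A)).
  rewrite -[coord_subst (gcoords 1 b 0 1) B](subrK (coord_subst (gcoords 1 0 0 1) B)).
  rewrite EuA EuB EsA EsB /= -natr1 !polyCM polyC0 /branch_y.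
  by rewrite !exprS; ring.
have ord_p2 : ord_ge p p.+2 (num g) (den g).
  apply: dvdp_expand_ord_ge; [lia | by rewrite expand_den_at0 // a1 oner_neq0 |].
  rewrite expand_numE; apply: dvdp_add; first exact: dvdp_mull (dvdpp _).
  by apply/dvdp_mulr/dvdp_exp2l.
have not_ord_p3 : ~ ord_ge p p.+3 (num g) (den g).
  have le3 : (p.+3 <= p * p.+1)%N by nia.
  move/(ord_ge_dvdp_expand le3); rewrite expand_numE => /lowest_coef_eq0 /eqP.
  by rewrite (negbTE (mulf_neq0 (mulf_neq0 b0 cA_neq0) cB_neq0)).
move=> n; split=> [ord_n | le_n]; last exact: ord_ge_le le_n ord_p2.
by rewrite leqNgt; apply/negP => lt_n; apply/not_ord_p3/(ord_ge_le lt_n ord_n).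
Qed.

Lemma ram_group_iff i g : inSL2p p g ->
  ram_group p A B i g <->
  if i == 0%N then inB p g else if (i <= p.+1)%N then inU p g else g = 1%:M.
Proof.
move=> sl2g; rewrite /ram_group -/num -/den (stabP_iff sl2g.1) /inB /inU.
have [c0|c_neq0] := eqVneq (gc g) 0; last first.
  split=> [[c0] | ]; first by rewrite c0 eqxx in c_neq0.
  case: ifP => _; first by case=> _ c0; rewrite c0 eqxx in c_neq0.
  case: ifP => _; first by case=> _ [c0]; rewrite c0 eqxx in c_neq0.
  by move=> g1; rewrite g1 /gc mxE eqxx in c_neq0.
have ad1 : ga g * gd g = 1.
  by move: sl2g.1; rewrite det_mx2 -/(gc g) c0 mulr0 subr0.
have a0 : ga g != 0 by apply: contra_eq_neq ad1 => ->; rewrite mul0r eq_sym oner_eq0.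
have [a1|a_neq1] := eqVneq (ga g) 1; last first.
  rewrite (ord_ge_Borel c0 a0 a_neq1) ltnS leqn0; case: ifP => _; first by split=> _; split.
  split=> [[]//|]; case: ifP => _ => [[_ [_ [a1 _]]] | g1].
    by rewrite a1 eqxx in a_neq1.
  by rewrite g1 /ga mxE eqxx mulr1n eqxx in a_neq1.
have d1 : gd g = 1 by rewrite a1 mul1r in ad1.
have [b0|b_neq0] := eqVneq (gb g) 0.
  have g1 : g = 1%:M by apply: eq_mx2; rewrite !mxE.
  have ord_g : ord_ge p i.+1 (num g) (den g).
    rewrite /num /den g1 !pullback1 subrr; exists 1, 0, 0.
    split; first by rewrite meval1 oner_neq0.
    by split=> [|u]; [rewrite rmorph0 !mulr0 mul0r addr0 | rewrite msupp0].
  by split=> _; [case: ifP => _; [|case: ifP => _] | ].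
rewrite (ord_ge_unipotent c0 a1 d1 b_neq0) ltnS.
case: ifP => [/eqP-> | _]; first by split=> _; split.
case: ifP => _; first by split=> _; split.
split=> [[]//|g1].
by rewrite g1 /gb mxE eqxx in b_neq0.
Qed.

End Filtration.
End Drinfeld.

Theorem mainTheorem8 (p : nat) (F : closedFieldType)
  (p_prime : prime p) (p_odd : odd p) (charF : p \in [pchar F])
  (A B : {mpoly F[3]}) (tP : local_param p A B) :
  (forall g : 'M[F]_2, inSL2p p g -> (stabP g <-> inB p g)) /\
  (forall (i : nat) (g : 'M[F]_2), inSL2p p g ->
     (ram_group p A B i g <->
        if i == 0%N then inB p g
        else if (i <= p.+1)%N then inU p g
        else g = 1%:M)).
Proof.
have p_gt1 := prime_gt1 p_prime.
split=> [g sl2g|i g].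
  by rewrite (stabP_iff sl2g.1); split=> [|[]].
have [d [cA [cB [cB' [PA [QA [PB [QB [-> -> cA_neq0 cB_neq0]]]]]]]]] :=
  local_param_P_form p_gt1 tP.
exact: ram_group_iff.
Qed.
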